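(* (1) If $p<m$, an element $w\in G(m,p,n)$ is regular if and only if there is an integer $r\ge1$ such that, with $g=\gcd(r,n)$, $w$ has exactly $g$ cycles, each of length $n/g$ and weight $r/g$ (mod $m$). (2) An element $w\in G(m,m,n)$ is regular if and only if there is an integer $r\ge1$ such that either (i) with $g=\gcd(r,n)$, $w$ has exactly $g$ cycles, each of length $n/g$ and weight $r/g$; or (ii) with $h=\gcd(r,n-1)$, $w$ has exactly $h+1$ cycles, of which $h$ have length $(n-1)/h$ and weight $r/h$, and the remaining one is a $1$-cycle of weight $-r$ (weights taken mod $m$).
   Context: Let $m,p,n$ be positive integers with $p\mid m$ and $\zeta=e^{2\pi i/m}$. $G(m,1,n)$ consists of pairs $w=[u;a]$, $u\in\mathfrak S_n$, $a\in(\mathbb Z/m\mathbb Z)^n$, identified with the monomial matrix with entry $\zeta^{a_i}$ in position $(u(i),i)$; it acts on $\mathbb C^n$. Cycles of $w$ are cycles of $u$ (fixed points included), and the weight of a cycle is the sum of $a_i$ over its elements, in $\mathbb Z/m\mathbb Z$. $G(m,p,n)$ is the subgroup of $w$ with $\sum_i a_i\equiv0\pmod p$. A reflection is an element whose fixed space in $\mathbb C^n$ has codimension $1$. An element $w$ of a complex reflection group $W$ is regular if it has an eigenvector $v\in\mathbb C^n$ that lies on no reflecting hyperplane of $W$ (i.e. $v\notin\operatorname{fix}(t)$ for every reflection $t\in W$). *)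

From HB Require Import structures.
From mathcomp Require Import all_boot all_order all_algebra all_fingroup all_field.
Set Implicit Arguments. Unset Strict Implicit. Unset Printing Implicit Defensive.
From mathcomp Require Import algC.
Import GRing.Theory Num.Theory.
Local Open Scope ring_scope.

(* An element w = [u; a] of G(m,1,n): u a permutation of {0..n-1},
   a : 'I_n -> Z/mZ (represented by 'I_m, m > 0). *)
Definition elt (m n : nat) := ({perm 'I_n} * {ffun 'I_n -> 'I_m})%type.

Definition eperm m n (w : elt m n) : {perm 'I_n} := w.1.
Definition ewt m n (w : elt m n) (i : 'I_n) : nat := w.2 i.

Definition inG (m p n : nat) (w : elt m n) : bool :=
  (p %| \sum_(i < n) ewt w i)%N.
Arguments inG m p n w : clear implicits.

Definition gmat (z : algC) m n (w : elt m n) : 'M[algC]_n :=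
  \matrix_(i, j) (if eperm w j == i then z ^+ ewt w j else 0).

(* fixed space of t (acting on column vectors) has codimension 1 *)
Definition is_reflection n (t : 'M[algC]_n) : Prop := \rank (t - 1%:M) = 1%N.

Definition regular (z : algC) (m p n : nat) (w : elt m n) : Prop :=
  exists (v : 'cV[algC]_n) (lam : algC),
    v != 0 /\ gmat z w *m v = lam *: v /\
    forall t : elt m n, inG m p n t -> is_reflection (gmat z t) ->
      gmat z t *m v != v.
Arguments regular z m p n w : clear implicits.

(* cycles of w = orbits of u (fixed points included); weight mod m *)
Definition cycles m n (w : elt m n) : {set {set 'I_n}} := porbits (eperm w).
Definition cweight m n (w : elt m n) (c : {set 'I_n}) : nat :=
  (\sum_(i in c) ewt w i)%N.

Definition cond_i (m n : nat) (w : elt m n) (r : nat) : Prop :=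
  let g := gcdn r n in
  #|cycles w| = g /\
  forall c, c \in cycles w -> (#|c| = n %/ g)%N /\ (cweight w c = r %/ g %[mod m])%N.

Definition cond_ii (m n : nat) (w : elt m n) (r : nat) : Prop :=
  let h := gcdn r n.-1 in
  #|cycles w| = h.+1 /\
  exists2 c0, c0 \in cycles w &
    [/\ #|c0| = 1%N, (cweight w c0 + r = 0 %[mod m])%N &
      forall c, c \in cycles w -> c != c0 ->
        (#|c| = n.-1 %/ h)%N /\ (cweight w c = r %/ h %[mod m])%N].

From HB Require Import structures.
From mathcomp Require Import all_boot all_order all_algebra all_fingroup all_field.
From mathcomp Require Import algC ring.
Set Implicit Arguments. Unset Strict Implicit. Unset Printing Implicit Defensive.
Import GRing.Theory Num.Theory.
Local Open Scope ring_scope.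

(** A vector v is regular for G(m,p,n) exactly when no coordinate of v is a power of
    zeta times another one (this is what the reflections swapping two coordinates with
    weights k and -k test), so that at most one coordinate vanishes, and none does when
    p < m (the diagonal reflections of weight p); conversely an element fixing such a
    vector is trivial on its support, and on the zero coordinate when it is in G(m,p,n).
    If w v = lam v, following the cycle of w through x gives
    lam^t v_(u^t x) = zeta^(S_t) v_x, with S_t the weight of the first t steps.  Hence,
    for every cycle of length L meeting the support of v, lam^m is a primitive L-th root
    of unity, so all these cycles have the same length L.  Writing lam = eta^e with eta a
    primitive mL-th root of unity such that eta^L = zeta, this forces gcd(e, L) = 1 and
    weight e mod m on every such cycle, and r is e times the number of these cycles.
    Conversely, for cycles of this shape and lam = eta^e, the vector with
    v_(u^t x) = 2^x zeta^(S_t) lam^(-t) along the cycle of a chosen x is a regular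
    eigenvector. *)

Lemma prim_root_of_order (R : nzRingType) n (x : R) :
  (0 < n)%N -> x ^+ n = 1 -> (forall t, (0 < t < n)%N -> x ^+ t != 1) ->
  n.-primitive_root x.
Proof.
move=> n_gt0 xn1 xt_neq1; have [d prim_d d_dvd_n] := prim_order_exists n_gt0 xn1.
have d_gt0 := prim_order_gt0 prim_d.
suff ->: n = d by [].
apply/eqP; rewrite eqn_leq (dvdn_leq n_gt0 d_dvd_n) andbT leqNgt.
apply/negP=> ltdn; move: (xt_neq1 d).
by rewrite d_gt0 ltdn (prim_expr_order prim_d) eqxx => /(_ isT).
Qed.

Lemma prim_root_order_inj (R : nzRingType) n1 n2 (x : R) :
  n1.-primitive_root x -> n2.-primitive_root x -> n1 = n2.
Proof.
move=> prim1 prim2; apply/eqP; rewrite eqn_dvd.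
rewrite (prim_order_dvd prim1) (prim_order_dvd prim2).
by rewrite (prim_expr_order prim1) (prim_expr_order prim2) eqxx.
Qed.

Lemma prim_root_neq0 (R : nzRingType) n (x : R) : n.-primitive_root x -> x != 0.
Proof. by move=> prim_x; rewrite (prim_root_eq0 prim_x) -lt0n (prim_order_gt0 prim_x). Qed.

Lemma norm_prim_root (R : numDomainType) n (x : R) :
  n.-primitive_root x -> `|x| = 1.
Proof.
move=> prim_x; apply/eqP; rewrite -(pexpr_eq1 (prim_order_gt0 prim_x)) //.
by rewrite -normrX (prim_expr_order prim_x) normr1.
Qed.

Lemma coprime_mod_lift m L k : (0 < m)%N -> (0 < L)%N -> coprime k m ->
  exists2 j, j = k %[mod m] & coprime j m && coprime j L.
Proof.
move=> m_gt0 L_gt0 co_km.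
pose x := (\prod_(q <- primes L | ~~ (q %| k)) q)%N.
have x_gt0 : (0 < x)%N.
  rewrite /x big_seq_cond prodn_cond_gt0 // => q /andP[].
  by rewrite mem_primes => /andP[/prime_gt0].
exists (k + m * x)%N; first by rewrite addnC mulnC modnMDl.
have j_gt0 : (0 < k + m * x)%N by rewrite addn_gt0 muln_gt0 m_gt0 x_gt0 orbT.
apply/andP; split; first by rewrite -coprime_modl addnC mulnC modnMDl coprime_modl.
rewrite coprime_has_primes //; apply/hasPn => q; rewrite mem_primes.
case/and3P=> pr_q _ q_dvd_L /=; rewrite mem_primes pr_q j_gt0 /=.
have q_dvd_x : (q %| x)%N = ~~ (q %| k)%N.
  rewrite /x Euclid_dvd_prod // big_has_cond; apply/hasP/idP => [[q']|nqk].
    rewrite mem_primes => /and3P[pr_q' _ _] /andP[nq'k].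
    by rewrite dvdn_prime2 // => /eqP ->.
  by exists q; rewrite ?mem_primes ?pr_q ?L_gt0 ?q_dvd_L //= nqk dvdnn.
have [q_dvd_k|nq_dvd_k] := boolP (q %| k)%N.
  rewrite dvdn_addr // Euclid_dvdM // q_dvd_x q_dvd_k orbF.
  by rewrite -prime_coprime // (coprime_dvdl q_dvd_k).
by rewrite dvdn_addl // dvdn_mull // q_dvd_x.
Qed.

Lemma prim_root_lift m L (z : algC) : (0 < L)%N -> m.-primitive_root z ->
  exists2 eta : algC, (m * L).-primitive_root eta & eta ^+ L = z.
Proof.
move=> L_gt0 prim_z; have m_gt0 := prim_order_gt0 prim_z.
have mL_gt0 : (0 < m * L)%N by rewrite muln_gt0 m_gt0.
have [theta prim_theta] := C_prim_root_exists mL_gt0.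
have prim_thetaL : m.-primitive_root (theta ^+ L).
  by have := exp_prim_root prim_theta L; rewrite gcdnMl mulnK.
have [k z_def] := prim_rootP prim_thetaL (prim_expr_order prim_z).
have co_km : coprime k m by rewrite -(prim_root_exp_coprime _ prim_thetaL) -z_def.
have [j j_mod /andP[co_jm co_jL]] := coprime_mod_lift m_gt0 L_gt0 co_km.
exists (theta ^+ j); first by rewrite prim_root_exp_coprime // coprimeMr co_jm.
by rewrite -exprM mulnC exprM -(prim_expr_mod prim_thetaL) j_mod prim_expr_mod.
Qed.

Lemma coprime_divn_gcdn a b : (0 < gcdn a b)%N ->
  coprime (a %/ gcdn a b) (b %/ gcdn a b).
Proof.
move=> g_gt0; rewrite /coprime -(eqn_pmul2l g_gt0) muln1 muln_gcdr.
by rewrite !(mulnC (gcdn a b)) !divnK ?dvdn_gcdl ?dvdn_gcdr.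
Qed.

Lemma big_traject (T : eqType) (F : T -> nat) (f : T -> T) x L :
  (\sum_(i <- traject f x L) F i = \sum_(s < L) F (iter s f x))%N.
Proof.
elim: L => [|L IHL]; first by rewrite big_nil big_ord0.
by rewrite trajectSr -cats1 big_cat big_seq1 big_ord_recr IHL.
Qed.

Lemma iter_porbit_neq (T : finType) (s : {perm T}) x t :
  (0 < t < #|porbit s x|)%N -> iter t s x != x.
Proof.
case/andP=> t_gt0 lt_tL; have L_gt0 := ltn_trans t_gt0 lt_tL.
rewrite -(nth_traject _ lt_tL) -[X in _ != X](nth_traject s L_gt0).
by rewrite nth_uniq ?size_traject ?uniq_traject_porbit // -lt0n.
Qed.

Lemma card_porbit_eq1 (T : finType) (s : {perm T}) x :
  (#|porbit s x| == 1%N) = (s x == x).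
Proof.
apply/idP/eqP => [/cards1P[y orbit_x] | fix_x].
  have := mem_porbit s 1 x; rewrite expg1 orbit_x inE => /eqP ->.
  by have := porbit_id s x; rewrite orbit_x inE => /eqP ->.
rewrite (@eq_card1 _ x) // => y; apply/porbitP/eqP => [[k ->]|->].
  by rewrite permX_fix.
by exists 0%N; rewrite expg0 perm1.
Qed.

Lemma rank_mul_col_row (F : fieldType) n (c : 'cV[F]_n) (r : 'rV[F]_n) :
  c *m r != 0 -> \rank (c *m r) = 1%N.
Proof.
move=> cr_neq0; apply/eqP; rewrite eqn_leq lt0n mxrank_eq0 cr_neq0 andbT.
by rewrite (leq_trans (mxrankM_maxr c r)) // rank_rV leq_b1.
Qed.

Section MonomialMatrix.
Variables (m n : nat) (z : algC).
Implicit Types (w : elt m n) (v : 'cV[algC]_n).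

Lemma gmat_mulE w v j :
  (gmat z w *m v) (eperm w j) 0 = z ^+ ewt w j * v j 0.
Proof.
rewrite !mxE (bigD1 j) //= mxE eqxx big1 ?addr0 // => i /negbTE neq_ij.
by rewrite mxE (inj_eq perm_inj) neq_ij mul0r.
Qed.

Lemma gmat_eigenP w v lam :
  reflect (forall j, lam * v (eperm w j) 0 = z ^+ ewt w j * v j 0)
          (gmat z w *m v == lam *: v).
Proof.
apply: (iffP eqP) => [wv j | eig_v]; first by rewrite -gmat_mulE wv mxE.
apply/matrixP=> i k; rewrite (ord1 k) -(permKV (eperm w) i) gmat_mulE mxE.
by rewrite eig_v.
Qed.

Lemma gmat_fixP w v :
  reflect (forall j, v (eperm w j) 0 = z ^+ ewt w j * v j 0) (gmat z w *m v == v).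
Proof.
rewrite -[X in _ == X]scale1r.
by apply: (iffP (gmat_eigenP _ _ _)) => fix_v j; rewrite -?fix_v mul1r ?fix_v.
Qed.

End MonomialMatrix.

(** * Reflections and regular vectors *)

Section Reflections.
Variables (m p n : nat) (z : algC).
Hypotheses (m_gt0 : (0 < m)%N) (prim_z : m.-primitive_root z).
Implicit Types (t : elt m n) (v : 'cV[algC]_n).

Definition regular_vec v :=
  forall t, inG m p n t -> is_reflection (gmat z t) -> gmat z t *m v != v.

Lemma inG_dvd t : (p %| m)%N -> inG m m n t -> inG m p n t.
Proof. exact: dvdn_trans. Qed.

Let inZm k : 'I_m := Ordinal (ltn_pmod k m_gt0).

Definition swap_refl (j j' : 'I_n) k : elt m n :=
  (tperm j j', [ffun i => if i == j then inZm k
                          else if i == j' then inZm (m - k %% m) else inZm 0]).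

Definition diag_refl (i0 : 'I_n) (k : 'I_m) : elt m n :=
  (1%g, [ffun i => if i == i0 then k else inZm 0]).

Lemma expr_mod_opp k : z ^+ ((m - k %% m) %% m)%N * z ^+ k = 1.
Proof.
rewrite (prim_expr_mod prim_z (m - _)) -(prim_expr_mod prim_z k) -exprD subnK.
  exact: prim_expr_order.
by rewrite ltnW ?ltn_pmod.
Qed.

Section Swap.
Variables (j j' : 'I_n) (k : nat).
Hypothesis neq_jj' : j != j'.

Lemma ewt_swap_refl i : ewt (swap_refl j j' k) i =
  (if i == j then k %% m else if i == j' then (m - k %% m) %% m else 0)%N.
Proof. by rewrite /ewt ffunE; case: ifP => //; case: ifP => // _ _; apply: mod0n. Qed.

Lemma swap_refl_inG : inG m m n (swap_refl j j' k).
Proof.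
rewrite /inG (bigD1 j) //= (bigD1 j') 1?eq_sym //= big1 => [|i /andP[neq_ij neq_ij']].
  rewrite !ewt_swap_refl eqxx eq_sym (negbTE neq_jj') eqxx addn0.
  by rewrite /dvdn modnDmr subnKC ?modnn // ltnW ?ltn_pmod.
by rewrite ewt_swap_refl (negbTE neq_ij) (negbTE neq_ij').
Qed.

Lemma swap_refl_reflection : is_reflection (gmat z (swap_refl j j' k)).
Proof.
pose c : 'cV[algC]_n := \col_x (if x == j then -1 else if x == j' then z ^+ k else 0).
pose r : 'rV[algC]_n :=
  \row_y (if y == j then 1 else if y == j' then - z ^+ ((m - k %% m) %% m)%N else 0).
have neq_j'j : j' != j by rewrite eq_sym.
rewrite /is_reflection; have -> : gmat z (swap_refl j j' k) - 1%:M = c *m r.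
  apply/matrixP => x y; rewrite !mxE big_ord1 !mxE !ewt_swap_refl /eperm /=.
  have [->|neq_yj] := eqVneq y j.
    rewrite tpermL mulr1 [j' == x]eq_sym (prim_expr_mod prim_z).
    have [->|neq_xj] := eqVneq x j; first by rewrite (negbTE neq_jj') sub0r.
    by rewrite subr0.
  have [->|neq_yj'] := eqVneq y j'.
    rewrite tpermR [j == x]eq_sym; have [->|neq_xj] := eqVneq x j.
      by rewrite (negbTE neq_jj') subr0 mulN1r opprK.
    have [_|neq_xj'] := eqVneq x j'; first by rewrite sub0r mulrN mulrC expr_mod_opp.
    by rewrite subr0 mul0r.
  rewrite tpermD 1?eq_sym // expr0 mulr0.
  by case: eqP => _; rewrite ?subrr ?subr0.
apply: rank_mul_col_row; apply/negP => /eqP/matrixP/(_ j j).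
by rewrite !mxE big_ord1 !mxE !eqxx mulr1 => /eqP; rewrite oppr_eq0 oner_eq0.
Qed.

Lemma swap_refl_fix v : v j' 0 = z ^+ k * v j 0 -> gmat z (swap_refl j j' k) *m v == v.
Proof.
move=> vj'; apply/gmat_fixP => i; rewrite ewt_swap_refl /eperm /=.
have [->|neq_ij] := eqVneq i j; first by rewrite tpermL (prim_expr_mod prim_z).
have [->|neq_ij'] := eqVneq i j'.
  by rewrite tpermR vj' mulrA expr_mod_opp mul1r.
by rewrite tpermD 1?eq_sym // expr0 mul1r.
Qed.

End Swap.

Section Diag.
Variables (i0 : 'I_n) (k : 'I_m).

Lemma ewt_diag_refl i : ewt (diag_refl i0 k) i = if i == i0 then val k else 0%N.
Proof. by rewrite /ewt ffunE; case: ifP => // _; apply: mod0n. Qed.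

Lemma diag_refl_inG : (p %| k)%N -> inG m p n (diag_refl i0 k).
Proof.
rewrite /inG (bigD1 i0) //= big1 => [|i /negbTE neq_ii0]; last by rewrite ewt_diag_refl neq_ii0.
by rewrite ewt_diag_refl eqxx addn0.
Qed.

Lemma diag_refl_reflection : k != 0%N :> nat -> is_reflection (gmat z (diag_refl i0 k)).
Proof.
move=> k_neq0; have zk_neq1 : z ^+ k != 1.
  by rewrite -(expr0 z) (eq_prim_root_expr prim_z) mod0n modn_small.
pose c : 'cV[algC]_n := \col_x (if x == i0 then z ^+ k - 1 else 0).
pose r : 'rV[algC]_n := \row_y (if y == i0 then 1 else 0).
rewrite /is_reflection; have -> : gmat z (diag_refl i0 k) - 1%:M = c *m r.
  apply/matrixP => x y; rewrite !mxE big_ord1 !mxE !ewt_diag_refl /eperm /= perm1.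
  have [->|neq_yi0] := eqVneq y i0; first by rewrite mulr1 eq_sym; case: eqVneq; rewrite ?subr0.
  by rewrite mulr0 expr0 eq_sym; case: eqVneq => _; rewrite ?subrr ?subr0.
apply: rank_mul_col_row; apply/negP => /eqP/matrixP/(_ i0 i0).
by rewrite !mxE big_ord1 !mxE eqxx mulr1 => /eqP; rewrite subr_eq0 (negbTE zk_neq1).
Qed.

Lemma diag_refl_fix v : v i0 0 = 0 -> gmat z (diag_refl i0 k) *m v == v.
Proof.
move=> vi0; apply/gmat_fixP => i; rewrite ewt_diag_refl /eperm /= perm1.
by case: eqVneq => [->|_]; rewrite ?vi0 ?mulr0 ?expr0 ?mul1r.
Qed.

End Diag.

Lemma regular_vec_sep v : (p %| m)%N -> regular_vec v ->
  forall j j' k, j != j' -> v j' 0 != z ^+ k * v j 0.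
Proof.
move=> p_dvd_m reg_v j j' k neq_jj'; apply: contra (reg_v _ _ _) => [/eqP||].
- exact: swap_refl_fix.
- exact/inG_dvd/swap_refl_inG.
- exact: swap_refl_reflection.
Qed.

Lemma regular_vec_neq0 v : (0 < p < m)%N -> regular_vec v -> forall i, v i 0 != 0.
Proof.
move=> /andP[p_gt0 lt_pm] reg_v i; apply: contra (reg_v _ _ _) => [/eqP||].
- exact: (diag_refl_fix (Ordinal lt_pm)).
- exact: diag_refl_inG.
- by apply: diag_refl_reflection; rewrite /= -lt0n.
Qed.

Lemma regular_vec_of_sep (Z : {set 'I_n}) v :
  {in Z &, forall a b : 'I_n, a = b} ->
  (forall t, inG m p n t -> (forall i, i \notin Z -> ewt t i = 0%N) -> forall i, ewt t i = 0%N) ->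
  (forall j, (v j 0 == 0) = (j \in Z)) ->
  (forall j j' k, j \notin Z -> j' \notin Z -> j != j' -> v j' 0 != z ^+ k * v j 0) ->
  regular_vec v.
Proof.
move=> Z_le1 diag_trivial v_eq0 sep_v t t_in_G t_refl; apply/negP => /gmat_fixP fix_v.
have [t_diag|t_nondiag] := eqVneq (eperm t) 1%g.
  have wt0 : forall i, ewt t i = 0%N.
    apply: diag_trivial => // i i_notin_Z; have vi_neq0 : v i 0 != 0 by rewrite v_eq0.
    have : z ^+ ewt t i == z ^+ 0.
      by rewrite expr0 -(can_eq (mulfK vi_neq0)) mul1r -fix_v t_diag perm1.
    by rewrite (eq_prim_root_expr prim_z) mod0n modn_small ?ltn_ord // => /eqP.
  suff t1 : gmat z t = 1%:M by move: t_refl; rewrite /is_reflection t1 subrr mxrank0.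
  by apply/matrixP => x y; rewrite !mxE t_diag perm1 wt0 expr0 eq_sym; case: eqP.
have [i ti_neq_i] : exists i, eperm t i != i.
  apply/existsP; apply: contraR t_nondiag => /existsPn t_id; apply/eqP/permP => i.
  by rewrite perm1; apply/eqP; rewrite -[_ == _]negbK t_id.
have := fix_v i; have [i_in_Z|i_notin_Z] := boolP (i \in Z).
  have /eqP -> : v i 0 == 0 by rewrite v_eq0.
  rewrite mulr0 => /eqP; rewrite v_eq0 => /Z_le1 /(_ i_in_Z) ti_eq_i.
  by rewrite ti_eq_i eqxx in ti_neq_i.
have [ti_in_Z|ti_notin_Z] := boolP (eperm t i \in Z).
  have /eqP -> : v (eperm t i) 0 == 0 by rewrite v_eq0.
  move/esym/eqP; rewrite mulf_eq0 expf_eq0 (negbTE (prim_root_neq0 prim_z)) andbF.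
  by rewrite v_eq0 (negbTE i_notin_Z).
by apply/eqP; rewrite sep_v // eq_sym.
Qed.

End Reflections.

(** * Eigenvectors along the cycles of an element *)

Section CycleWeights.
Variables (m n : nat) (w : elt m n).
Local Notation u := (eperm w).

Definition path_wt x t := (\sum_(s < t) ewt w (iter s u x))%N.

Lemma path_wtS x t : path_wt x t.+1 = (path_wt x t + ewt w (iter t u x))%N.
Proof. exact: big_ord_recr. Qed.

Lemma cweight_porbit x : cweight w (porbit u x) = path_wt x #|porbit u x|.
Proof.
rewrite /cweight (eq_bigl (mem (traject u x #|porbit u x|))) => [|i]; last first.
  by rewrite /= porbit_traject.
by rewrite -big_uniq ?uniq_traject_porbit // big_traject.
Qed.

End CycleWeights.

Section EigenvectorCycles.
Variables (m n : nat) (z : algC) (w : elt m n) (v : 'cV[algC]_n) (lam : algC).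
Hypothesis prim_z : m.-primitive_root z.
Hypothesis eig_v : forall j, lam * v (eperm w j) 0 = z ^+ ewt w j * v j 0.
Hypothesis sep_v : forall j j' k, j != j' -> v j' 0 != z ^+ k * v j 0.
Local Notation u := (eperm w).

Lemma eigen_iter t x : lam ^+ t * v (iter t u x) 0 = z ^+ path_wt w x t * v x 0.
Proof.
elim: t => [|t IHt]; first by rewrite /path_wt big_ord0 !expr0 !mul1r.
by rewrite path_wtS exprSr -mulrA /= eig_v mulrCA IHt mulrA -exprD addnC.
Qed.

Lemma eigen_cycle_pow x : v x 0 != 0 -> lam ^+ #|porbit u x| = z ^+ cweight w (porbit u x).
Proof.
by move=> vx_neq0; apply: (mulIf vx_neq0); rewrite cweight_porbit -eigen_iter iter_porbit.
Qed.

Lemma eigen_prim_root x : v x 0 != 0 -> #|porbit u x|.-primitive_root (lam ^+ m).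
Proof.
move=> vx_neq0; apply: prim_root_of_order; first by rewrite lt0n card_porbit_neq0.
  by rewrite exprAC eigen_cycle_pow // exprAC (prim_expr_order prim_z) expr1n.
move=> t t_range; apply/eqP => lam_tm1.
have [k lam_t] := prim_rootP prim_z (etrans (exprAC _ _ _) lam_tm1).
have neq_x : x != iter t u x by rewrite eq_sym iter_porbit_neq.
apply/negP: (sep_v ((m - k) + path_wt w x t) neq_x); apply/negPn/eqP.
rewrite exprD -mulrA -eigen_iter lam_t mulrA -exprD subnK ?(prim_expr_order prim_z) ?mul1r //.
exact: ltnW.
Qed.

Lemma eigen_cycle_shape x0 : v x0 0 != 0 ->
  exists L e, [/\ (0 < e)%N, coprime e L &
    forall x, v x 0 != 0 -> #|porbit u x| = L /\ (cweight w (porbit u x) = e %[mod m])%N].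
Proof.
move=> vx0_neq0; have m_gt0 := prim_order_gt0 prim_z; set L := #|porbit u x0|.
have L_gt0 : (0 < L)%N by rewrite lt0n card_porbit_neq0.
have prim_lam := eigen_prim_root vx0_neq0.
have [eta prim_eta eta_L] := prim_root_lift L_gt0 prim_z.
have [e0 lam_e0] := prim_rootP prim_eta (etrans (exprM _ _ _) (prim_expr_order prim_lam)).
set e := (e0 + m * L)%N. (* rather than e0, which may be 0 *)
have lam_e : lam = eta ^+ e by rewrite lam_e0 exprD (prim_expr_order prim_eta) mulr1.
have prim_etam : L.-primitive_root (eta ^+ m).
  by have := exp_prim_root prim_eta m; rewrite gcdnMr mulKn.
exists L, e; split => //.
- by rewrite /e addn_gt0 muln_gt0 m_gt0 L_gt0 orbT.
- by rewrite -(prim_root_exp_coprime _ prim_etam) -exprM mulnC exprM -lam_e.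
move=> x vx_neq0; have L_x := prim_root_order_inj (eigen_prim_root vx_neq0) prim_lam.
split=> //; apply/eqP; rewrite -(eq_prim_root_expr prim_z) -eigen_cycle_pow // L_x.
by rewrite lam_e -eta_L -!exprM mulnC.
Qed.

Lemma sep_coord_neq0 i0 j : v i0 0 = 0 -> j != i0 -> v j 0 != 0.
Proof.
move=> vi0_eq0 neq_ji0; have neq_i0j : i0 != j by rewrite eq_sym.
by have := sep_v 0 neq_i0j; rewrite vi0_eq0 mulr0.
Qed.

Lemma eigen_zero_fixed i0 : v i0 0 = 0 -> u i0 = i0.
Proof.
move=> vi0_eq0; set j := (u^-1)%g i0; have u_j : u j = i0 by rewrite /j permKV.
have [j_i0|/(sep_coord_neq0 vi0_eq0) vj_neq0] := eqVneq j i0; first by rewrite -{1}j_i0 u_j.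
have := eig_v j; rewrite u_j vi0_eq0 mulr0 => /esym/eqP.
by rewrite mulf_eq0 (negbTE vj_neq0) orbF expf_eq0 (negbTE (prim_root_neq0 prim_z)) andbF.
Qed.

End EigenvectorCycles.

(** * A regular eigenvector for cycles of equal length and weight *)

Section CycleEigenvector.
Variables (m n : nat) (z : algC) (w : elt m n) (L s : nat) (Z : {set 'I_n}) (eta : algC).
Hypothesis prim_z : m.-primitive_root z.
Hypothesis co_sL : coprime s L.
Hypothesis cycles_off_Z : forall j, j \notin Z ->
  #|porbit (eperm w) j| = L /\ (cweight w (porbit (eperm w) j) = s %[mod m])%N.
Hypothesis fixed_Z : forall j, j \in Z -> eperm w j = j.
Hypotheses (prim_eta : (m * L).-primitive_root eta) (eta_L : eta ^+ L = z).
Local Notation u := (eperm w).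
Local Notation lam := (eta ^+ s).

Definition cycle_rep j := odflt j [pick k in porbit u j].

Definition cycle_pos j := index j (traject u (cycle_rep j) L).

(* The factor [2 ^+ cycle_rep j] gives distinct moduli to coordinates on distinct
   cycles; the other factor has modulus 1. *)
Definition cycle_vec : 'cV[algC]_n := \col_j
  if j \in Z then 0 else
  2%:R ^+ cycle_rep j * (z ^+ path_wt w (cycle_rep j) (cycle_pos j) / lam ^+ cycle_pos j).

Lemma porbit_cycle_rep j : porbit u (cycle_rep j) = porbit u j.
Proof.
apply/eqP; rewrite eq_porbit_mem /cycle_rep.
by case: pickP => //= /(_ j); rewrite porbit_id.
Qed.

Lemma cycle_rep_perm j : cycle_rep (u j) = cycle_rep j.
Proof.
have := porbit_perm u 1 j; rewrite expg1 /cycle_rep => ->.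
by case: pickP => //= /(_ j); rewrite porbit_id.
Qed.

Lemma perm_notin_Z j : j \notin Z -> u j \notin Z.
Proof. by apply: contra => uj_in_Z; rewrite -(perm_inj (fixed_Z uj_in_Z)). Qed.

Section OffZ.
Variable j : 'I_n.
Hypothesis j_notin_Z : j \notin Z.

Lemma card_porbit_rep : #|porbit u (cycle_rep j)| = L.
Proof. by rewrite porbit_cycle_rep; case: (cycles_off_Z j_notin_Z). Qed.

Lemma uniq_traject_rep : uniq (traject u (cycle_rep j) L).
Proof. by rewrite -card_porbit_rep uniq_traject_porbit. Qed.

Lemma mem_traject_rep : j \in traject u (cycle_rep j) L.
Proof. by rewrite -card_porbit_rep -porbit_traject porbit_cycle_rep porbit_id. Qed.

Lemma cycle_pos_lt : (cycle_pos j < L)%N.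
Proof. by rewrite /cycle_pos -{2}(size_traject u (cycle_rep j) L) index_mem mem_traject_rep. Qed.

Lemma iter_cycle_pos : iter (cycle_pos j) u (cycle_rep j) = j.
Proof. by rewrite -(nth_traject u cycle_pos_lt) nth_index // mem_traject_rep. Qed.

End OffZ.

Lemma prim_lam_m : L.-primitive_root (lam ^+ m).
Proof.
have prim_etam : L.-primitive_root (eta ^+ m).
  by have := exp_prim_root prim_eta m; rewrite gcdnMr mulKn ?(prim_order_gt0 prim_z).
by rewrite exprAC prim_root_exp_coprime.
Qed.

Lemma lam_neq0 : lam != 0.
Proof. exact/expf_neq0/(prim_root_neq0 prim_eta). Qed.

Lemma cycle_vec_eigen j : lam * cycle_vec (u j) 0 = z ^+ ewt w j * cycle_vec j 0.
Proof.
rewrite !mxE; have [j_in_Z|j_notin_Z] := boolP (j \in Z).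
  by rewrite (fixed_Z j_in_Z) j_in_Z !mulr0.
rewrite (negbTE (perm_notin_Z j_notin_Z)) cycle_rep_perm.
have lt_tL := cycle_pos_lt j_notin_Z; have iter_t := iter_cycle_pos j_notin_Z.
set x := cycle_rep j in iter_t *; set t := cycle_pos j in lt_tL iter_t *.
have [lt_t1L|ge_t1L] := ltnP t.+1 L.
  have -> : cycle_pos (u j) = t.+1.
    rewrite /cycle_pos cycle_rep_perm -/x -iter_t -iterS -(nth_traject u lt_t1L x).
    by rewrite index_uniq ?size_traject ?uniq_traject_rep.
  rewrite path_wtS iter_t exprD exprS; field.
  by rewrite lam_neq0 expf_neq0 ?lam_neq0.
have t1_L : t.+1 = L by apply/eqP; rewrite eqn_leq lt_tL ge_t1L.
have uj_x : u j = x.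
  by rewrite -iter_t -iterS t1_L -(card_porbit_rep j_notin_Z) iter_porbit.
have -> : cycle_pos (u j) = 0%N.
  by rewrite /cycle_pos cycle_rep_perm -/x uj_x -t1_L trajectS /= eqxx.
have lam_t1 : z ^+ ewt w j * z ^+ path_wt w x t = lam ^+ t.+1.
  rewrite -exprD addnC -iter_t -path_wtS t1_L -exprM mulnC exprM eta_L.
  rewrite -(card_porbit_rep j_notin_Z) -cweight_porbit.
  apply/eqP; rewrite (eq_prim_root_expr prim_z) porbit_cycle_rep; apply/eqP.
  by case: (cycles_off_Z j_notin_Z).
rewrite /path_wt big_ord0 [RHS]mulrCA [z ^+ ewt w j * (_ * _)]mulrA lam_t1 exprS.
by field; rewrite expf_neq0 ?lam_neq0.
Qed.

Lemma cycle_vec_eq0 j : (cycle_vec j 0 == 0) = (j \in Z).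
Proof.
rewrite mxE; case: (j \in Z); rewrite ?eqxx // !mulf_eq0 invr_eq0 (expf_eq0 lam).
by rewrite (negbTE lam_neq0) !expf_eq0 pnatr_eq0 (negbTE (prim_root_neq0 prim_z)) !andbF.
Qed.

Lemma norm_cycle_vec j : j \notin Z -> `|cycle_vec j 0| = 2%:R ^+ cycle_rep j.
Proof.
have z_norm1 := norm_prim_root prim_z; have eta_norm1 := norm_prim_root prim_eta.
move=> j_notin_Z; rewrite mxE (negbTE j_notin_Z) normrM normf_div !normrX.
by rewrite z_norm1 eta_norm1 !expr1n divr1 mulr1 normr_nat.
Qed.

Lemma cycle_vec_sep j j' k : j \notin Z -> j' \notin Z -> j != j' ->
  cycle_vec j' 0 != z ^+ k * cycle_vec j 0.
Proof.
move=> j_notin_Z j'_notin_Z neq_jj'; apply/eqP => vj'.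
have same_rep : cycle_rep j' = cycle_rep j.
  have := congr1 Num.norm vj'; rewrite normrM normrX (norm_prim_root prim_z) expr1n mul1r.
  rewrite !norm_cycle_vec // -!natrX => /eqP; rewrite eqr_nat => /eqP /expnI.
  by move=> /(_ isT) /val_inj.
have two_neq0 : (2%:R : algC) ^+ cycle_rep j != 0 by rewrite expf_neq0 ?pnatr_eq0.
move: vj'; rewrite !mxE (negbTE j_notin_Z) (negbTE j'_notin_Z) same_rep [RHS]mulrCA.
move=> /(mulfI two_neq0) /(congr1 (fun a => a ^+ m)).
rewrite !exprMn !exprVn ![(z ^+ _) ^+ m]exprAC (prim_expr_order prim_z) !expr1n !mul1r.
rewrite ![(_ ^+ cycle_pos _) ^+ m]exprAC => /invr_inj /eqP.
rewrite (eq_prim_root_expr prim_lam_m) !modn_small ?cycle_pos_lt // => /eqP same_pos.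
move: neq_jj'; rewrite -(iter_cycle_pos j_notin_Z) -(iter_cycle_pos j'_notin_Z).
by rewrite same_rep same_pos eqxx.
Qed.

End CycleEigenvector.

Lemma regular_of_uniform_cycles m p n z (w : elt m n) L s (Z : {set 'I_n}) :
  m.-primitive_root z -> (0 < L)%N -> coprime s L ->
  (forall j, j \notin Z ->
    #|porbit (eperm w) j| = L /\ (cweight w (porbit (eperm w) j) = s %[mod m])%N) ->
  (forall j, j \in Z -> eperm w j = j) ->
  (exists j, j \notin Z) -> {in Z &, forall a b : 'I_n, a = b} ->
  (forall t : elt m n, inG m p n t -> (forall i, i \notin Z -> ewt t i = 0%N) ->
     forall i, ewt t i = 0%N) ->
  regular z m p n w.
Proof.
move=> prim_z L_gt0 co_sL cycles_off_Z fixed_Z [j0 j0_notin_Z] Z_le1 diag_trivial.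
have [eta prim_eta eta_L] := prim_root_lift L_gt0 prim_z.
have v_eq0 := cycle_vec_eq0 w s Z prim_z prim_eta.
exists (cycle_vec z w L s Z eta), (eta ^+ s); split; last split.
- by apply: contraNneq j0_notin_Z => v0; rewrite -v_eq0 v0 mxE.
- exact/eqP/gmat_eigenP/(cycle_vec_eigen prim_z cycles_off_Z fixed_Z prim_eta eta_L).
apply: (regular_vec_of_sep prim_z Z_le1 diag_trivial v_eq0).
exact: (cycle_vec_sep prim_z co_sL cycles_off_Z prim_eta).
Qed.

(** * Cycle types of regular elements *)

Section CycleCounting.
Variables (m n : nat) (w : elt m n).

Lemma sum_over_cycles (F : 'I_n -> nat) :
  (\sum_(i < n) F i = \sum_(c in cycles w) \sum_(i in c) F i)%N.
Proof.
rewrite (partition_big_imset (porbit (eperm w))) /=.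
by apply: eq_bigr => _ /imsetP[x _ ->]; apply: eq_bigl => i; rewrite eq_porbit_mem.
Qed.

Lemma sum_card_cycles : (\sum_(c in cycles w) #|c| = n)%N.
Proof.
rewrite -[RHS]card_ord -sum1_card sum_over_cycles.
by apply: eq_bigr => c _; rewrite sum1_card.
Qed.

Lemma porbit_in_cycles x : porbit (eperm w) x \in cycles w.
Proof. exact: imset_f. Qed.

Lemma cyclesP c : c \in cycles w -> exists x, c = porbit (eperm w) x.
Proof. by case/imsetP => x _ ->; exists x. Qed.

End CycleCounting.

Lemma cond_i_of_eigenvector m n z (w : elt m n) (v : 'cV[algC]_n) lam :
  m.-primitive_root z -> (0 < n)%N ->
  (forall j, lam * v (eperm w j) 0 = z ^+ ewt w j * v j 0) ->
  (forall j j' k, j != j' -> v j' 0 != z ^+ k * v j 0) ->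
  (forall i, v i 0 != 0) ->
  exists2 r, (0 < r)%N & cond_i w r.
Proof.
move=> prim_z n_gt0 eig_v sep_v v_neq0.
have [L [e [e_gt0 co_eL uniform]]] :=
  eigen_cycle_shape prim_z eig_v sep_v (v_neq0 (Ordinal n_gt0)).
have {}uniform c : c \in cycles w -> #|c| = L /\ (cweight w c = e %[mod m])%N.
  by case/cyclesP => x ->; apply: uniform.
set g := #|cycles w|.
have n_gL : n = (g * L)%N.
  by rewrite -{1}(sum_card_cycles w) -sum_nat_const; apply: eq_bigr => c /uniform[].
have g_gt0 : (0 < g)%N by move: n_gt0; rewrite n_gL muln_gt0 => /andP[].
exists (g * e)%N; first by rewrite muln_gt0 g_gt0.
have gcd_g : gcdn (g * e) n = g by rewrite n_gL -muln_gcdr (eqP co_eL) muln1.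
have n_div_g : (n %/ g = L)%N by rewrite n_gL mulKn.
by rewrite /cond_i gcd_g n_div_g mulKn.
Qed.

Lemma regular_of_cond_i m p n z (w : elt m n) r :
  m.-primitive_root z -> (0 < n)%N -> (0 < r)%N -> cond_i w r -> regular z m p n w.
Proof.
rewrite /cond_i; set g := gcdn r n => prim_z n_gt0 r_gt0 [_ uniform].
have g_gt0 : (0 < g)%N by rewrite gcdn_gt0 r_gt0.
have L_gt0 : (0 < n %/ g)%N.
  by have [<- _] := uniform _ (porbit_in_cycles w (Ordinal n_gt0)); rewrite lt0n card_porbit_neq0.
apply: (regular_of_uniform_cycles (Z := set0) prim_z L_gt0 (coprime_divn_gcdn g_gt0)).
- by move=> j _; apply/uniform/porbit_in_cycles.
- by move=> j; rewrite inE.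
- by exists (Ordinal n_gt0); rewrite inE.
- by move=> a b; rewrite inE.
- by move=> t _ wt0 i; apply: wt0; rewrite inE.
Qed.

Lemma cond_ii_of_eigenvector m n z (w : elt m n) (v : 'cV[algC]_n) lam x0 i0 :
  m.-primitive_root z -> inG m m n w ->
  (forall j, lam * v (eperm w j) 0 = z ^+ ewt w j * v j 0) ->
  (forall j j' k, j != j' -> v j' 0 != z ^+ k * v j 0) ->
  v x0 0 != 0 -> v i0 0 = 0 ->
  exists2 r, (0 < r)%N & cond_ii w r.
Proof.
move=> prim_z w_in_G eig_v sep_v vx0_neq0 vi0_eq0.
set u := eperm w; set c0 := porbit u i0.
have c0_1 : c0 = [set i0].
  have /eqP card_c0 : #|c0| == 1%N.
    by rewrite card_porbit_eq1 (eigen_zero_fixed prim_z eig_v sep_v vi0_eq0).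
  by apply/esym/eqP; rewrite eqEcard sub1set porbit_id cards1 card_c0.
have [L [e [e_gt0 co_eL uniform]]] := eigen_cycle_shape prim_z eig_v sep_v vx0_neq0.
have {}uniform c : c \in cycles w -> c != c0 -> #|c| = L /\ (cweight w c = e %[mod m])%N.
  case/cyclesP => x -> neq_c0; apply/uniform/(sep_coord_neq0 sep_v vi0_eq0).
  by apply: contraNneq neq_c0 => ->.
have c0_in : c0 \in cycles w by apply: porbit_in_cycles.
set h := #|cycles w :\ c0|.
have h1_card : #|cycles w| = h.+1 by rewrite (cardsD1 c0) c0_in.
have n1_hL : n.-1 = (h * L)%N.
  rewrite -(sum_card_cycles w) (bigD1 c0) //= {1}c0_1 cards1 add1n /= -sum_nat_const.
  apply: eq_big => [c|c /andP[cc neq_c0]]; first by rewrite in_setD1 andbC.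
  by case: (uniform c cc neq_c0).
have h_gt0 : (0 < h)%N.
  apply/card_gt0P; exists (porbit u x0); rewrite in_setD1 porbit_in_cycles andbT.
  apply: contraNneq vx0_neq0 => orbit_x0; have := porbit_id u x0.
  by rewrite orbit_x0 c0_1 inE => /eqP ->; rewrite vi0_eq0.
exists (h * e)%N; first by rewrite muln_gt0 h_gt0.
have gcd_h : gcdn (h * e) n.-1 = h by rewrite n1_hL -muln_gcdr (eqP co_eL) muln1.
rewrite /cond_ii gcd_h; split => //; exists c0 => //; split.
- by rewrite c0_1 cards1.
- have wt_sum := sum_over_cycles w (ewt w); rewrite (bigD1 c0) //= in wt_sum.
  have wt_rest : (\sum_(c in cycles w | c != c0) cweight w c = h * e %[mod m])%N.
    rewrite -modn_summ -[in RHS]sum_nat_const -[RHS]modn_summ.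
    congr (_ %% m)%N; apply: eq_big => [c|c /andP[cc neq_c0]]; first by rewrite in_setD1 andbC.
    by case: (uniform c cc neq_c0).
  move: w_in_G; rewrite /inG wt_sum /dvdn => /eqP w_in_G.
  by rewrite mod0n -modnDmr -wt_rest modnDmr.
- by move=> c cc neq_c0; have [-> ->] := uniform c cc neq_c0; rewrite n1_hL !mulKn.
Qed.

Lemma regular_of_cond_ii m n z (w : elt m n) r :
  m.-primitive_root z -> (0 < r)%N -> cond_ii w r -> regular z m m n w.
Proof.
rewrite /cond_ii; set h := gcdn r n.-1.
move=> prim_z r_gt0 [card_cycles [c0 c0_in [c0_1 _ uniform]]].
have [i0 c0_def] := cyclesP c0_in.
have u_i0 : eperm w i0 = i0 by apply/eqP; rewrite -card_porbit_eq1 -c0_def c0_1.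
have c0_i0 : c0 = [set i0].
  by apply/esym/eqP; rewrite eqEcard sub1set c0_def porbit_id -c0_def c0_1 cards1.
have h_gt0 : (0 < h)%N by rewrite gcdn_gt0 r_gt0.
have [c c_in neq_c0] : exists2 c, c \in cycles w & c != c0.
  have : ~~ (cycles w \subset [set c0]).
    apply: contraTN h_gt0 => /subset_leq_card; rewrite cards1 card_cycles ltnS.
    by rewrite leqn0 => /eqP ->.
  by case/subsetPn => c c_in; rewrite inE; exists c.
have [x c_def] := cyclesP c_in.
have off_i0 j : j \notin [set i0] -> porbit (eperm w) j \in cycles w /\ porbit (eperm w) j != c0.
  rewrite porbit_in_cycles inE => neq_ji0; split=> //.
  by apply: contraNneq neq_ji0 => orbit_j; rewrite -in_set1 -c0_i0 -orbit_j porbit_id.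
have x_notin : x \notin [set i0].
  by rewrite inE; apply: contraNneq neq_c0 => x_i0; rewrite c_def x_i0 c0_def.
have L_gt0 : (0 < n.-1 %/ h)%N.
  by have [<- _] := uniform c c_in neq_c0; rewrite c_def lt0n card_porbit_neq0.
apply: (regular_of_uniform_cycles (Z := [set i0]) prim_z L_gt0 (coprime_divn_gcdn h_gt0)).
- by move=> j /off_i0[j_in j_neq]; apply: uniform.
- by move=> j; rewrite inE => /eqP ->.
- by exists x.
- by move=> a b; rewrite !inE => /eqP -> /eqP ->.
move=> t t_in_G wt0 i; have [->|neq_ii0] := eqVneq i i0; last by rewrite wt0 ?inE.
move: t_in_G; rewrite /inG (bigD1 i0) //= big1 ?addn0 => [|j neq_ji0]; last by rewrite wt0 ?inE.
by rewrite /dvdn modn_small ?ltn_ord // => /eqP.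
Qed.

Lemma regular_cond_i m p n z (w : elt m n) :
  m.-primitive_root z -> (0 < n)%N -> (p %| m)%N -> (0 < p < m)%N ->
  regular z m p n w -> exists r, (0 < r)%N /\ cond_i w r.
Proof.
move=> prim_z n_gt0 p_dvd_m p_range [v [lam [_ [/eqP/gmat_eigenP eig_v reg_v]]]].
have m_gt0 := prim_order_gt0 prim_z.
have sep_v := regular_vec_sep m_gt0 prim_z p_dvd_m reg_v.
have v_neq0 := regular_vec_neq0 m_gt0 prim_z p_range reg_v.
by have [r] := cond_i_of_eigenvector prim_z n_gt0 eig_v sep_v v_neq0; exists r.
Qed.

Lemma regular_cond_i_or_ii m n z (w : elt m n) :
  m.-primitive_root z -> (0 < n)%N -> inG m m n w ->
  regular z m m n w -> exists r, (0 < r)%N /\ (cond_i w r \/ cond_ii w r).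
Proof.
move=> prim_z n_gt0 w_in_G [v [lam [v_neq0 [/eqP/gmat_eigenP eig_v reg_v]]]].
have sep_v := regular_vec_sep (prim_order_gt0 prim_z) prim_z (dvdnn m) reg_v.
have [/forallP v_neq0'|/forallPn[i0 /negPn/eqP vi0_eq0]] := boolP [forall i, v i 0 != 0].
  have [r r_gt0 cond_r] := cond_i_of_eigenvector prim_z n_gt0 eig_v sep_v v_neq0'.
  by exists r; split; [|left].
have [x0 vx0_neq0] : exists x0, v x0 0 != 0.
  apply/existsP; apply: contraNT v_neq0 => /existsPn v_eq0; apply/eqP/matrixP => i k.
  by rewrite (ord1 k) mxE; apply/eqP/negbNE.
have [r r_gt0 cond_r] := cond_ii_of_eigenvector prim_z w_in_G eig_v sep_v vx0_neq0 vi0_eq0.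
by exists r; split; [|right].
Qed.

Local Close Scope ring_scope.
Unset Implicit Arguments.
Set Strict Implicit.

Theorem mainTheorem14 (m p n : nat) (z : algC) :
  (0 < m)%N -> (0 < p)%N -> (0 < n)%N -> p %| m -> (m.-primitive_root z)%R ->
  ((p < m)%N -> forall w : elt m n, inG m p n w ->
     (regular z m p n w <-> exists r, (0 < r)%N /\ cond_i w r)) /\
  (forall w : elt m n, inG m m n w ->
     (regular z m m n w <-> exists r, (0 < r)%N /\ (cond_i w r \/ cond_ii w r))).
Proof.
move=> _ p_gt0 n_gt0 p_dvd_m prim_z; split=> [lt_pm w _ | w w_in_G]; split.
- by apply: regular_cond_i; rewrite ?p_gt0.
- by case=> r [r_gt0 cond_r]; apply: regular_of_cond_i cond_r.
- exact: regular_cond_i_or_ii.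
- case=> r [r_gt0 [cond_r|cond_r]]; first exact: regular_of_cond_i cond_r.
  exact: regular_of_cond_ii cond_r.
Qed.
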